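(* Let $G$ be a connected graph on $n$ nodes with degree vector $\mathbf d=(d_1,\dots,d_n)^T$, Laplacian $L$ and average degree $\bar d=\frac1n\sum_i d_i$. Suppose there exist a vector $\beta\in\mathbb R^n$ and a constant $C$ such that, componentwise, $$\mathbf d\;\le\;\frac{1}{2\log2}L\beta+\frac{C\bar d}{\log 2}\mathbf 1 .$$ Then there exists $k\in\{1,\dots,n\}$ and a constant $c_C$ depending only on $C$ such that, for the averaging process started at $v(0)=e_k$ (the $k$-th standard basis vector), for every $\epsilon<1$, $$\mathbb E\|v(t)-\bar v\|_1\ge\epsilon\quad\text{whenever}\quad t\le\frac{(1-\epsilon)\,n\log n}{2C}-c_C\,n .$$
   Context: Let $G=(V,E)$ be a finite, undirected graph with $V=\{1,\dots,n\}$. The averaging process on $G$: the state vector $v(t)\in\mathbb R^n$, $t=0,1,2,\dots$, starts from a given $v(0)$; at each step $t\ge 1$ an edge $\{i,j\}\in E$ is chosen uniformly at random (independently of all previous choices) and both $v_i$ and $v_j$ are replaced by $(v_i+v_j)/2$, all other coordinates unchanged. Let $\bar v=(a,\dots,a)^T$ with $a=\frac1n\sum_i v_i(0)$. $L=D-A$ is the graph Laplacian and $\mathbf 1$ the all-ones vector. Logarithms are natural. *)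

From HB Require Import structures.
From mathcomp Require Import all_boot all_order all_algebra.
From mathcomp Require Import all_classical all_reals all_analysis.
Set Implicit Arguments. Unset Strict Implicit. Unset Printing Implicit Defensive.
Import Order.TTheory GRing.Theory Num.Theory.
Local Open Scope ring_scope.

Definition simple_graph (n : nat) (e : rel 'I_n) : Prop :=
  symmetric e /\ irreflexive e.

Definition connected_graph (n : nat) (e : rel 'I_n) : Prop :=
  forall i j : 'I_n, connect e i j.

Section Graph.
Variables (R : realType) (n : nat) (e : rel 'I_n).

Definition deg (i : 'I_n) : R := (#|[set j | e i j]|)%:R.

Definition avg_deg : R := (\sum_i deg i) / n%:R.

Definition laplacian : 'M[R]_n :=
  \matrix_(i, j) ((if i == j then deg i else 0) - (e i j)%:R).

Definition edge_pred : pred ('I_n * 'I_n) :=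
  fun p => e p.1 p.2 && (p.1 < p.2)%N.

Definition num_edges : nat := #|edge_pred|.

Definition avg_step (v : 'I_n -> R) (i j : 'I_n) : 'I_n -> R :=
  fun k => if (k == i) || (k == j) then (v i + v j) / 2 else v k.

(* exp_avg t v F = E[ F(v(t)) ] for the averaging process started at
   v(0) = v, where at each step an edge is chosen uniformly at random,
   independently of the past (recursion on the first chosen edge). *)
Fixpoint exp_avg (t : nat) (v : 'I_n -> R) (F : ('I_n -> R) -> R) : R :=
  match t with
  | 0 => F v
  | t'.+1 =>
      (\sum_(p | edge_pred p) exp_avg t' (avg_step v p.1 p.2) F)
        / (num_edges)%:R
  end.

End Graph.

Definition basis_vec (R : realType) (n : nat) (k : 'I_n) : 'I_n -> R :=
  fun x => (x == k)%:R.

Definition mean (R : realType) (n : nat) (v : 'I_n -> R) : R :=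
  (\sum_i v i) / n%:R.

Definition dist1_mean (R : realType) (n : nat) (a : R) (v : 'I_n -> R) : R :=
  \sum_i `|v i - a|.

From HB Require Import structures.
From mathcomp Require Import all_boot all_order all_algebra.
From mathcomp Require Import all_classical all_reals all_analysis.
From mathcomp Require Import ring lra.
Set Implicit Arguments.
Unset Strict Implicit.
Unset Printing Implicit Defensive.
Import Order.TTheory GRing.Theory Num.Theory.
Local Open Scope ring_scope.

(* The proof tracks the potential Phi(w) = sum_k (- w_k ln w_k + beta_k w_k)
   of the (stochastic) state vector w.  Averaging along an edge {i,j} raises
   the entropy part by at most (w_i + w_j) ln 2 and changes the linear part by
   -(beta_i - beta_j)(w_i - w_j)/2.  Averaged over the m edges, the expected
   increase of Phi is at most (1/m) sum_i w_i (d_i ln 2 - (L beta)_i / 2),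
   which the hypothesis bounds by C dbar / m = 2C / n.  Starting from e_k
   with beta_k minimal gives E Phi(v(t)) <= beta_k + 2Ct/n.  Conversely the
   entropy of w is at least (1 - |w - 1/n|_1) ln n - ln 2 and
   sum_k beta_k w_k >= beta_k, so
   |w - vbar|_1 >= 1 - (Phi(w) - beta_k + ln 2) / ln n.
   Taking expectations gives the claim with c_C = ln 2 / (2C); for C <= 0 the
   range of admissible t is empty. *)

Section Entropy.
Variable R : realType.

Definition ent (x : R) : R := - (x * ln x).

Lemma xlnx_le_mul_ln (a s : R) : 0 <= a -> a <= s -> a * ln a <= a * ln s.
Proof.
move=> a_ge0 a_le_s; have [->|a_neq0] := eqVneq a 0; first by rewrite !mul0r.
have a_gt0 : 0 < a by rewrite lt_def a_neq0.
by rewrite ler_wpM2l // ler_ln // posrE (lt_le_trans a_gt0).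
Qed.

Lemma ent_midpoint_le (a b : R) : 0 <= a -> 0 <= b ->
  2 * ent ((a + b) / 2) - ent a - ent b <= (a + b) * ln 2.
Proof.
move=> a_ge0 b_ge0; rewrite /ent.
have [ab0|ab_neq0] := eqVneq (a + b) 0.
  have [-> ->] : a = 0 /\ b = 0 by split; lra.
  by rewrite !(mul0r, add0r, oppr0, mulr0, subr0).
have ab_gt0 : 0 < a + b by rewrite lt_def ab_neq0 addr_ge0.
have ha := @xlnx_le_mul_ln a (a + b) a_ge0 ltac:(lra).
have hb := @xlnx_le_mul_ln b (a + b) b_ge0 ltac:(lra).
rewrite ln_div ?posrE //.
have -> : 2 * - ((a + b) / 2 * (ln (a + b) - ln 2)) =
          - ((a + b) * ln (a + b)) + (a + b) * ln 2 by field.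
lra.
Qed.

(* [x - |x - 1/N| - (x - 1/N)] is [min(x, 2/N - x)]; its sum over a
   probability vector [w] is [1 - |w - 1/N|_1]. *)
Lemma ent_ge_tent (N x : R) : 2 <= N -> 0 <= x -> x <= 1 ->
  ln N * (x - `|x - N^-1| - (x - N^-1)) - x * ln 2 <= ent x.
Proof.
move=> N_ge2 x_ge0 x_le1; rewrite /ent.
have N_gt0 : 0 < N by lra.
have ln2_ge0 : 0 <= ln (2 : R) by rewrite ln_ge0 // ler1n.
have lnN_ge0 : 0 <= ln N by rewrite ln_ge0 //; lra.
have nrm_ge := ler_norm (x - N^-1).
have nrm_geN := ler_norm (- (x - N^-1)); rewrite normrN in nrm_geN.
have x_ln2 : 0 <= x * ln 2 by rewrite mulr_ge0.
have [x_small|x_large] := lerP x (2 / N).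
  have := xlnx_le_mul_ln x_ge0 x_small.
  rewrite ln_div ?posrE // => xlnx_le.
  have : ln N * (x - `|x - N^-1| - (x - N^-1)) <= ln N * x.
    by rewrite ler_wpM2l //; lra.
  lra.
have := @xlnx_le_mul_ln x 1 x_ge0 x_le1; rewrite ln1 mulr0 => xlnx_le0.
have : ln N * (x - `|x - N^-1| - (x - N^-1)) <= ln N * (2 / N - x).
  by rewrite ler_wpM2l //; lra.
have : ln N * (2 / N - x) <= 0 by rewrite mulr_ge0_le0 //; lra.
lra.
Qed.

End Entropy.

Section ProbVec.
Variables (R : realType) (n : nat).

Definition prob_vec (w : 'I_n -> R) : Prop :=
  (forall k, 0 <= w k) /\ \sum_k w k = 1.

Lemma prob_vec_le1 w k : prob_vec w -> w k <= 1.
Proof.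
case=> w_ge0; rewrite (bigD1 k) //= => w_sum.
have : 0 <= \sum_(i | i != k) w i by apply: sumr_ge0.
lra.
Qed.

Lemma prob_vec_basis k : prob_vec (basis_vec R k).
Proof.
split=> [x|]; first by rewrite ler0n.
rewrite (bigD1 k) //= big1 ?addr0 => [|x /negbTE x_neq_k]; rewrite /basis_vec.
  by rewrite eqxx.
by rewrite x_neq_k.
Qed.

Lemma mean_basis (k : 'I_n) : mean (basis_vec R k) = n%:R^-1.
Proof. by rewrite /mean (proj2 (prob_vec_basis k)) mul1r. Qed.

Lemma ent_sum_ge_dist1 w : (1 < n)%N -> prob_vec w ->
  (1 - dist1_mean n%:R^-1 w) * ln n%:R - ln 2 <= \sum_k ent (w k).
Proof.
move=> n_gt1 w_prob; have [w_ge0 w_sum] := w_prob.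
have n_ge2 : 2 <= n%:R :> R by rewrite ler_nat.
apply: le_trans (ler_sum _ (fun k _ => ent_ge_tent n_ge2 (w_ge0 k)
                                         (prob_vec_le1 k w_prob))).
rewrite sumrB -mulr_sumr !sumrB -mulr_suml w_sum sumr_const card_ord.
rewrite -[n%:R^-1 *+ n]mulr_natr mulVf ?pnatr_eq0 -?lt0n ?(ltnW n_gt1) //.
by rewrite subrr subr0 mul1r mulrC.
Qed.

End ProbVec.

Section AveragingProcess.
Variables (R : realType) (n : nat) (e : rel 'I_n).

Definition avg_closed (P : ('I_n -> R) -> Prop) : Prop :=
  forall v p, edge_pred e p -> P v -> P (avg_step v p.1 p.2).

Lemma edge_pred_neq p : edge_pred e p -> p.1 != p.2.
Proof. by case/andP=> _ lt12; rewrite neq_ltn lt12. Qed.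

Lemma sum_avg_step (F : 'I_n -> R -> R) (v : 'I_n -> R) i j : i != j ->
  \sum_k F k (avg_step v i j k) = \sum_k F k (v k)
     + F i ((v i + v j) / 2) + F j ((v i + v j) / 2) - F i (v i) - F j (v j).
Proof.
move=> i_neq_j.
have split_ij (u : 'I_n -> R) :
    \sum_k u k = u i + u j + \sum_(k | (k != i) && (k != j)) u k.
  rewrite (bigD1 i) //= (bigD1 j) /= ?addrA //.
  by rewrite eq_sym.
rewrite split_ij [\sum_k F k (v k)]split_ij /avg_step eqxx /= eqxx orbT.
rewrite (eq_bigr (fun k => F k (v k))); first lra.
by move=> k /andP[/negbTE-> /negbTE->].
Qed.

Lemma prob_vec_avg_closed : avg_closed (@prob_vec R n).
Proof.
move=> v p /edge_pred_neq i_neq_j [v_ge0 v_sum]; split.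
  move=> k; rewrite /avg_step; case: ifP => // _.
  by rewrite divr_ge0 ?addr_ge0.
rewrite (sum_avg_step (fun _ x => x)) // v_sum; lra.
Qed.

Lemma exp_avg_le (P : ('I_n -> R) -> Prop) t v F G : avg_closed P ->
  (forall w, P w -> F w <= G w) -> P v -> exp_avg e t v F <= exp_avg e t v G.
Proof.
move=> P_closed F_le_G; elim: t v => [|t IH] v Pv /=; first exact: F_le_G.
apply: ler_wpM2r; first by rewrite invr_ge0.
by apply: ler_sum => p ep; apply/IH/P_closed.
Qed.

Lemma exp_avg_affine t v F (a b : R) : (0 < num_edges e)%N ->
  exp_avg e t v (fun w => a * F w + b) = a * exp_avg e t v F + b.
Proof.
move=> m_gt0; elim: t v => [//|t IH] v /=.
under eq_bigr do rewrite IH.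
rewrite big_split /= -mulr_sumr sumr_const mulrDl -mulrA; congr (_ + _).
rewrite -[X in b *+ X]/(num_edges e) -[b *+ _]mulr_natr mulfK //.
by rewrite pnatr_eq0 -lt0n.
Qed.

Lemma exp_avg_drift (P : ('I_n -> R) -> Prop) Phi (delta : R) t v :
  (0 < num_edges e)%N -> avg_closed P ->
  (forall w, P w -> exp_avg e 1 w Phi <= Phi w + delta) ->
  P v -> exp_avg e t v Phi <= Phi v + t%:R * delta.
Proof.
move=> m_gt0 P_closed drift; elim: t v => [|t IH] v Pv.
  by rewrite mul0r addr0.
(* [exp_avg e t.+1 v Phi] is convertible to
   [exp_avg e 1 v (fun w => exp_avg e t w Phi)]: condition on the first step. *)
have first_step : exp_avg e t.+1 v Phi
                  <= exp_avg e 1 v (fun w => 1 * Phi w + t%:R * delta).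
  apply: (@exp_avg_le P 1 v (fun w => exp_avg e t w Phi) _ P_closed) => //.
  by move=> w Pw; rewrite mul1r IH.
rewrite exp_avg_affine // mul1r in first_step.
have := drift v Pv; rewrite -natr1; lra.
Qed.

End AveragingProcess.

Section Graph.
Variables (R : realType) (n : nat) (e : rel 'I_n).

Lemma degE i : deg R e i = \sum_j (e i j)%:R.
Proof.
rewrite /deg (eq_bigr (fun j => if e i j then 1 else 0)) => [|j _].
  by rewrite -big_mkcond /= sumr_const cardsE.
by case: (e i j).
Qed.

Lemma laplacian_mulE (beta : 'cV[R]_n) i :
  (laplacian R e *m beta) i 0 = \sum_j (e i j)%:R * (beta i 0 - beta j 0).
Proof.
rewrite !mxE; under eq_bigr do rewrite mxE mulrBl.
rewrite sumrB (bigD1 i) //= big1 ?addr0 => [|j]; last first.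
  by rewrite eq_sym => /negbTE->; rewrite mul0r.
under [RHS]eq_bigr do rewrite mulrBr.
by rewrite sumrB eqxx degE mulr_suml.
Qed.

Hypotheses (e_sym : symmetric e) (e_irr : irreflexive e).

Lemma sum_edges_adj (h : 'I_n -> 'I_n -> R) :
  \sum_(p | edge_pred e p) (h p.1 p.2 + h p.2 p.1)
  = \sum_i \sum_j (e i j)%:R * h i j.
Proof.
rewrite big_split /= pair_bigA /=.
under [RHS]eq_bigr do rewrite mulr_natl mulrb.
rewrite -big_mkcond [RHS](bigID (fun p : 'I_n * 'I_n => (p.1 < p.2)%N)) /=.
congr (_ + _).
have swap_inj : injective (fun p : 'I_n * 'I_n => (p.2, p.1)).
  by move=> [a b] [c d] [-> ->].
rewrite [RHS](reindex_inj swap_inj) /=; apply: eq_bigl => -[a b] /=.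
rewrite /edge_pred /=.
case: (ltngtP a b) => [a_lt_b|b_lt_a|a_eq_b]; rewrite ?andbF ?andbT //=.
by rewrite (val_inj a_eq_b) e_irr.
Qed.

Lemma handshake : \sum_i deg R e i = 2 * (num_edges e)%:R.
Proof.
have := sum_edges_adj (fun _ _ => 1); rewrite /= sumr_const.
rewrite -[X in _ *+ X]/(num_edges e) => m_eq.
under eq_bigr do rewrite degE.
transitivity (\sum_i \sum_j (e i j)%:R * (1 : R)).
  by apply: eq_bigr => i _; apply: eq_bigr => j _; rewrite mulr1.
by rewrite -m_eq mulr_natr.
Qed.

Lemma num_edges_gt0 : (1 < n)%N -> connected_graph e -> (0 < num_edges e)%N.
Proof.
move=> n_gt1 e_conn; apply/card_gt0P.
pose i0 : 'I_n := Ordinal (ltnW n_gt1); pose i1 : 'I_n := Ordinal n_gt1.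
have /connectP [[|y p] /= path_y last_y] := e_conn i0 i1.
  by move/(congr1 val): last_y.
have e_i0y : e i0 y by case/andP: path_y.
case: (ltngtP i0 y) => [i0_lt_y|y_lt_i0|i0_eq_y].
- by exists (i0, y); rewrite unfold_in /edge_pred /= e_i0y i0_lt_y.
- by exists (y, i0); rewrite unfold_in /edge_pred /= e_sym e_i0y y_lt_i0.
- by move: e_i0y; rewrite (val_inj i0_eq_y) e_irr.
Qed.

End Graph.

Section Potential.
Variables (R : realType) (n : nat) (e : rel 'I_n) (beta : 'cV[R]_n).

Definition potential (w : 'I_n -> R) : R := \sum_k (ent (w k) + beta k 0 * w k).

Lemma potential_basis k : potential (basis_vec R k) = beta k 0.
Proof.
rewrite /potential (bigD1 k) //= big1 ?addr0 => [|x /negbTE x_neq_k].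
  by rewrite /basis_vec eqxx /ent ln1 !mulr0 oppr0 mulr1 add0r.
by rewrite /basis_vec /ent x_neq_k !mul0r oppr0 mulr0 addr0.
Qed.

Lemma potential_avg_step v i j : i != j -> 0 <= v i -> 0 <= v j ->
  potential (avg_step v i j) <= potential v
    + (v i + v j) * ln 2 - (beta i 0 - beta j 0) * (v i - v j) / 2.
Proof.
move=> i_neq_j vi_ge0 vj_ge0.
rewrite /potential (sum_avg_step (fun k x => ent x + beta k 0 * x)) //.
have := ent_midpoint_le vi_ge0 vj_ge0; lra.
Qed.

Lemma dist1_ge_potential k w : (1 < n)%N -> (forall j, beta k 0 <= beta j 0) ->
  prob_vec w ->
  1 - (potential w - beta k 0 + ln 2) / ln n%:R <= dist1_mean n%:R^-1 w.
Proof.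
move=> n_gt1 k_min w_prob.
have lnn_gt0 : 0 < ln n%:R :> R by rewrite ln_gt0 // ltr1n.
have ent_ge := ent_sum_ge_dist1 n_gt1 w_prob.
have lin_ge : beta k 0 <= \sum_j beta j 0 * w j.
  rewrite -[beta k 0]mulr1 -(proj2 w_prob) mulr_sumr.
  apply: ler_sum => j _.
  by apply: ler_wpM2r; [exact: (proj1 w_prob) | exact: k_min].
set D := dist1_mean _ w in ent_ge *.
suff : (1 - D) * ln n%:R <= potential w - beta k 0 + ln 2.
  by rewrite -ler_pdivlMr // => ?; lra.
rewrite /potential big_split /=; lra.
Qed.

Hypotheses (e_sym : symmetric e) (e_irr : irreflexive e).
Hypothesis m_gt0 : (0 < num_edges e)%N.

Lemma potential_drift (K : R) v :
  (forall i, ln 2 * deg R e i - (laplacian R e *m beta) i 0 / 2 <= K) ->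
  prob_vec v -> exp_avg e 1 v potential <= potential v + K / (num_edges e)%:R.
Proof.
move=> K_ge [v_ge0 v_sum].
have m_pos : 0 < (num_edges e)%:R :> R by rewrite ltr0n.
rewrite /= ler_pdivrMr // mulrDl divfK ?gt_eqF //.
(* The bound of [potential_avg_step] on edge {i,j} is [A i j + A j i], so
   summing it over the edges gives a sum over ordered adjacent pairs. *)
pose A i j := v i * ln 2 - (beta i 0 - beta j 0) * v i / 2.
apply: le_trans (_ : \sum_(p | edge_pred e p)
                       (potential v + (A p.1 p.2 + A p.2 p.1)) <= _).
  apply: ler_sum => p ep.
  have := potential_avg_step (edge_pred_neq ep) (v_ge0 p.1) (v_ge0 p.2).
  rewrite /A; lra.
rewrite big_split /= sumr_const -[X in _ *+ X]/(num_edges e).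
rewrite -[potential v *+ _]mulr_natr lerD2l sum_edges_adj //.
rewrite -[K]mul1r -[X in X * K]v_sum mulr_suml; apply: ler_sum => i _.
have -> : \sum_j (e i j)%:R * A i j =
    v i * (ln 2 * deg R e i - (laplacian R e *m beta) i 0 / 2).
  rewrite laplacian_mulE degE mulrBr mulrA mulr_sumr mulr_suml mulr_sumr -sumrB.
  by apply: eq_bigr => j _; rewrite /A; ring.
by apply: ler_wpM2l.
Qed.

Lemma exp_dist1_ge_basis k (K : R) t :
  (1 < n)%N -> (forall j, beta k 0 <= beta j 0) ->
  (forall i, ln 2 * deg R e i - (laplacian R e *m beta) i 0 / 2 <= K) ->
  1 - (t%:R * (K / (num_edges e)%:R) + ln 2) / ln n%:R
    <= exp_avg e t (basis_vec R k) (dist1_mean n%:R^-1).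
Proof.
move=> n_gt1 k_min K_ge.
have lnn_gt0 : 0 < ln n%:R :> R by rewrite ln_gt0 // ltr1n.
have drift : exp_avg e t (basis_vec R k) potential
             <= beta k 0 + t%:R * (K / (num_edges e)%:R).
  rewrite -{1}potential_basis.
  apply: (exp_avg_drift t m_gt0 (@prob_vec_avg_closed R n e) _
                        (prob_vec_basis R k)).
  by move=> w; apply: potential_drift.
pose c := 1 - (ln 2 - beta k 0) / ln n%:R.
have lower :
    exp_avg e t (basis_vec R k) (fun w => - (ln n%:R)^-1 * potential w + c)
    <= exp_avg e t (basis_vec R k) (dist1_mean n%:R^-1).
  apply: (exp_avg_le t (@prob_vec_avg_closed R n e) _ (prob_vec_basis R k)).
  move=> w w_prob.
  have -> : - (ln n%:R)^-1 * potential w + c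
            = 1 - (potential w - beta k 0 + ln 2) / ln n%:R.
    by rewrite /c; field; rewrite gt_eqF.
  exact: dist1_ge_potential.
rewrite exp_avg_affine // in lower; apply: le_trans lower.
set T := t%:R * _ in drift *.
have -> : 1 - (T + ln 2) / ln n%:R = - (ln n%:R)^-1 * (beta k 0 + T) + c.
  by rewrite /c; field; rewrite gt_eqF.
rewrite lerD2r !mulNr lerN2; apply: ler_wpM2l => //.
by rewrite invr_ge0 ltW.
Qed.

End Potential.

Lemma ln2_deg_sub_le (R : realType) (d x K : R) :
  d <= x / (2 * ln 2) + K / ln 2 -> ln 2 * d - x / 2 <= K.
Proof.
have ln2_gt0 : 0 < ln 2 :> R by rewrite ln_gt0 // ltr1n.
move=> /(ler_wpM2l (ltW ln2_gt0)).
have -> : ln 2 * (x / (2 * ln 2) + K / ln 2) = x / 2 + K.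
  by field; rewrite gt_eqF.
lra.
Qed.

Lemma eps_le_of_time_bound (R : realType) (C eps t N L : R) :
  0 < C -> 0 < N -> 0 < L ->
  t <= (1 - eps) * N * L / (2 * C) - ln 2 / (2 * C) * N ->
  eps <= 1 - (t * (2 * C / N) + ln 2) / L.
Proof.
move=> C_gt0 N_gt0 L_gt0 t_le.
have rate_ge0 : 0 <= 2 * C / N by rewrite divr_ge0 //; lra.
have := ler_wpM2r rate_ge0 t_le.
have -> : ((1 - eps) * N * L / (2 * C) - ln 2 / (2 * C) * N) * (2 * C / N)
          = (1 - eps) * L - ln 2 by field; rewrite !gt_eqF.
move=> time_le.
suff : (t * (2 * C / N) + ln 2) / L <= 1 - eps by lra.
by rewrite ler_pdivrMr //; lra.
Qed.

Theorem theorem5 (R : realType) (C : R) :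
  exists cC : R,
  forall (n : nat) (e : rel 'I_n) (beta : 'cV[R]_n),
    (1 < n)%N ->
    simple_graph e ->
    connected_graph e ->
    (forall i : 'I_n,
        deg R e i <=
        (laplacian R e *m beta) i 0 / (2 * ln 2) + C * avg_deg R e / ln 2) ->
    exists k : 'I_n,
      forall (eps : R) (t : nat), eps < 1 ->
        t%:R <= (1 - eps) * n%:R * ln n%:R / (2 * C) - cC * n%:R ->
        eps <= exp_avg e t (basis_vec R k)
                 (dist1_mean (mean (basis_vec R k))).
Proof.
exists (if 0 < C then ln 2 / (2 * C) else 1).
move=> n e beta n_gt1 [e_sym e_irr] e_conn deg_le.
have [k _ k_min] :=
  @arg_minP _ _ _ (Ordinal (ltnW n_gt1)) xpredT (fun i => beta i 0) isT.
exists k => eps t eps_lt1 t_le; rewrite mean_basis.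
have n_gt0 : 0 < n%:R :> R by rewrite ltr0n ltnW.
have lnn_gt0 : 0 < ln n%:R :> R by rewrite ln_gt0 // ltr1n.
have t_ge0 : 0 <= t%:R :> R by rewrite ler0n.
have [C_gt0|C_le0] := ltrP 0 C; last first.
  have : (1 - eps) * n%:R * ln n%:R / (2 * C) <= 0.
    by rewrite mulr_ge0_le0 ?invr_le0 ?mulr_ge0 //; lra.
  by move: t_le; rewrite ltNge C_le0 /= mul1r; lra.
rewrite C_gt0 in t_le.
have m_gt0 := num_edges_gt0 e_sym e_irr n_gt1 e_conn.
have K_ge i := ln2_deg_sub_le (deg_le i).
apply: le_trans
  (exp_dist1_ge_basis e_sym e_irr m_gt0 t n_gt1 (k_min ^~ isT) K_ge).
have -> : C * avg_deg R e / (num_edges e)%:R = 2 * C / n%:R.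
  by rewrite /avg_deg handshake //; field; rewrite gt_eqF // pnatr_eq0 -lt0n.
exact: eps_le_of_time_bound.
Qed.
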